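(* Let $G$ be a strongly connected directed graph on $n\ge 1$ vertices with nonnegative integer edge weights and radius $R=\min_u\max_v d_G(u,v)$, and let $k$ be a positive integer. Let $G'$ be obtained from $G$ by multiplying every edge weight by $2$ and adding a new vertex $x$ together with edges $(x,u)$ and $(u,x)$ of weight $k$ for every $u\in V(G)$. Then $R\ge k$ if and only if $\sum_{u\in V(G')}\max_{v\in V(G')}d_{G'}(u,v)=2kn+k$.
   Context: $d_G(u,v)$ denotes the shortest-path distance in $G$. *)

From HB Require Import structures.
From mathcomp Require Import all_boot.
From Stdlib Require Import ClassicalEpsilon.
Set Implicit Arguments. Unset Strict Implicit. Unset Printing Implicit Defensive.

(* A weighted directed graph on a finite vertex type T:
   w u v = Some c  means there is an edge (u,v) of weight c (c : nat, nonnegative);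
   w u v = None    means there is no edge (u,v). *)
Definition wgraph (T : finType) := T -> T -> option nat.

Definition edge (T : finType) (w : wgraph T) : rel T := fun u v => w u v != None.

Definition wt (T : finType) (w : wgraph T) (u v : T) : nat := odflt 0 (w u v).

(* a walk from u to v : the vertex sequence after u *)
Definition is_walk (T : finType) (w : wgraph T) (u v : T) (p : seq T) : bool :=
  path (edge w) u p && (last u p == v).

Definition walk_weight (T : finType) (w : wgraph T) (u : T) (p : seq T) : nat :=
  sumn (pairmap (wt w) u p).

Definition has_walk_of_weight (T : finType) (w : wgraph T) (u v : T) (d : nat) : Prop :=
  exists p, is_walk w u v p /\ walk_weight w u p = d.

Definition hwb (T : finType) (w : wgraph T) (u v : T) : pred nat :=
  fun d => if excluded_middle_informative (has_walk_of_weight w u v d) then true else false.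

Lemma hwb_ex (T : finType) (w : wgraph T) (u v : T) :
  (exists d, has_walk_of_weight w u v d) -> exists d, hwb w u v d.
Proof.
move=> [d Hd]; exists d; rewrite /hwb.
by case: excluded_middle_informative.
Qed.

(* shortest-path distance d_G(u,v): minimum total weight of a walk from u to v
   (0 by convention if v is unreachable from u; irrelevant for strongly
   connected graphs) *)
Definition dist (T : finType) (w : wgraph T) (u v : T) : nat :=
  match excluded_middle_informative (exists d, has_walk_of_weight w u v d) with
  | left H => ex_minn (hwb_ex H)
  | right _ => 0
  end.

Definition strongly_connected (T : finType) (w : wgraph T) : Prop :=
  forall u v : T, connect (edge w) u v.

Definition ecc (T : finType) (w : wgraph T) (u : T) : nat := \max_(v : T) dist w u v.

(* radius min_u max_v d(u,v) (0 for the empty graph) *)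
Definition radius (T : finType) (w : wgraph T) : nat :=
  match [pick u : T] with
  | Some u0 => \big[minn/ecc w u0]_(u : T) ecc w u
  | None => 0
  end.

(* G': double all weights, add new vertex x (= None) joined both ways to
   every old vertex by edges of weight k *)
Definition extend (T : finType) (w : wgraph T) (k : nat) : wgraph (option T) :=
  fun a b => match a, b with
  | Some u, Some v => omap (muln 2) (w u v)
  | None, Some _ => Some k
  | Some _, None => Some k
  | None, None => None
  end.

From HB Require Import structures.
From mathcomp Require Import all_boot.
From Stdlib Require Import ClassicalEpsilon.

Set Implicit Arguments. Unset Strict Implicit. Unset Printing Implicit Defensive.

(** In G' every old vertex reaches every other one through x at cost 2k, and a
   walk that avoids x is the double of a walk of G, so
   d_G'(u,v) = min(2 d_G(u,v), 2k) for old u, v, while x has eccentricity k.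
   Hence the eccentricity of an old vertex u in G' is at most 2k, with equality
   iff some d_G(u,v) >= k, i.e. iff ecc_G(u) >= k.  The sum of the
   eccentricities of G' is therefore at most 2kn + k, with equality iff every
   vertex of G has eccentricity at least k, i.e. iff R >= k. *)

Lemma big_option (R : Type) (idx : R) (op : Monoid.com_law idx) (T : finType)
    (F : option T -> R) :
  \big[op/idx]_(u : option T) F u = op (F None) (\big[op/idx]_(v : T) F (Some v)).
Proof.
rewrite (bigD1 None) //=; congr (op _ _).
rewrite (reindex_omap Some id) /=; last by case.
by apply: eq_bigl => v; rewrite eqxx.
Qed.

Lemma leq_bigmin (I : finType) (x : nat) (F : I -> nat) (i : I) :
  \big[minn/x]_(j : I) F j <= F i.
Proof.
rewrite unlock; have : i \in index_enum I by rewrite mem_index_enum.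
elim: (index_enum I) => //= j s IHs; rewrite in_cons => /predU1P [<-|/IHs].
  exact: geq_minl.
exact: leq_trans (geq_minr _ _).
Qed.

Section Distance.
Variables (T : finType) (w : wgraph T).

Lemma leq_radius n :
  0 < #|T| -> (n <= radius w) <-> (forall u, n <= ecc w u).
Proof.
rewrite /radius; case: pickP => [u0 _ _|/eq_card0 -> //].
split=> [le_n u | le_n]; first exact: leq_trans le_n (leq_bigmin _ _ _).
by apply: (big_ind (leq n)) => // a b le_na le_nb; rewrite leq_min le_na le_nb.
Qed.

Lemma dist_min u v d : has_walk_of_weight w u v d -> dist w u v <= d.
Proof.
move=> walk_d; rewrite /dist; case: excluded_middle_informative => [ex_d|]; last first.
  by case; exists d.
case: ex_minnP => m _ min_m; apply: min_m; rewrite /hwb.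
by case: excluded_middle_informative.
Qed.

Lemma dist_has_walk u v :
  (exists d, has_walk_of_weight w u v d) -> has_walk_of_weight w u v (dist w u v).
Proof.
move=> ex_d; rewrite /dist; case: excluded_middle_informative => [ex_d'|//].
by case: ex_minnP => m; rewrite /hwb; case: excluded_middle_informative.
Qed.

Lemma connect_has_walk u v :
  connect (edge w) u v -> exists d, has_walk_of_weight w u v d.
Proof.
by case/connectP=> p p_path ->; exists (walk_weight w u p), p; rewrite /is_walk p_path eqxx.
Qed.

End Distance.

Section Extension.
Variables (T : finType) (w : wgraph T) (k : nat).
Local Notation w' := (extend w k).

Lemma edge_extend_some a b : edge w' (Some a) (Some b) = edge w a b.
Proof. by rewrite /edge /=; case: (w a b). Qed.

Lemma wt_extend_some a b : wt w' (Some a) (Some b) = 2 * wt w a b.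
Proof. by rewrite /wt /=; case: (w a b). Qed.

Lemma path_extend_some a q :
  path (edge w') (Some a) (map Some q) = path (edge w) a q.
Proof. by elim: q a => [|b q IHq] a //=; rewrite edge_extend_some IHq. Qed.

Lemma walk_weight_extend_some a q :
  walk_weight w' (Some a) (map Some q) = 2 * walk_weight w a q.
Proof.
elim: q a => [|b q IHq] a; first by rewrite /walk_weight muln0.
by move: (IHq b); rewrite /walk_weight /= wt_extend_some mulnDr => ->.
Qed.

Lemma map_Some_of_notin_None (p : seq (option T)) :
  None \notin p -> exists q, p = map Some q.
Proof.
elim: p => [|[b|] p IHp]; rewrite ?in_cons //=; first by exists [::].
by move=> /IHp [q ->]; exists (b :: q).
Qed.

Lemma walk_weight_from_apex p v :
  path (edge w') None p -> last None p = Some v -> k <= walk_weight w' None p.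
Proof. by case: p => [|[b|] p] //= _ _; apply: leq_addr. Qed.

Lemma walk_weight_through_apex a p v :
  path (edge w') (Some a) p -> last (Some a) p = Some v -> None \in p ->
  2 * k <= walk_weight w' (Some a) p.
Proof.
elim: p a => [|[b|] p IHp] a //=.
  rewrite in_cons /= => /andP [_ /IHp le_2k] /le_2k {}le_2k /le_2k.
  by move/leq_trans; apply; rewrite /walk_weight /= leq_addl.
move=> p_path /(walk_weight_from_apex p_path) le_k _.
by rewrite /walk_weight /= /wt /= mul2n -addnn leq_add2l.
Qed.

Lemma has_walk_via_apex u v : has_walk_of_weight w' (Some u) (Some v) (2 * k).
Proof. by exists [:: None; Some v]; rewrite /is_walk /walk_weight /= /wt /= addn0 addnn mul2n. Qed.

Lemma dist_extend_some_none u : dist w' (Some u) None <= k.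
Proof. by apply: dist_min; exists [:: None]; rewrite /is_walk /walk_weight /= /wt /= addn0. Qed.

Lemma dist_extend_none_some v : dist w' None (Some v) = k.
Proof.
have walk_k : has_walk_of_weight w' None (Some v) k.
  by exists [:: Some v]; rewrite /is_walk /walk_weight /= /wt /= addn0.
apply/eqP; rewrite eqn_leq dist_min //=.
have [p [/andP [p_path /eqP p_last] <-]] := dist_has_walk (ex_intro _ k walk_k).
exact: walk_weight_from_apex p_path p_last.
Qed.

Lemma ecc_extend_none : 0 < #|T| -> ecc w' None = k.
Proof.
case/card_gt0P=> v _; apply/eqP; rewrite eqn_leq.
apply/andP; split; last first.
  by rewrite -{1}(dist_extend_none_some v) (@leq_bigmax _ (dist w' None)).
apply/bigmax_leqP=> -[b|] _; first by rewrite dist_extend_none_some.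
have walk_0 : has_walk_of_weight w' None None 0 by exists [::]; rewrite /is_walk eqxx.
exact: leq_trans (dist_min walk_0) (leq0n k).
Qed.

Lemma ecc_extend_some_le u : ecc w' (Some u) <= 2 * k.
Proof.
apply/bigmax_leqP=> -[v|] _; first exact/dist_min/has_walk_via_apex.
by apply: leq_trans (dist_extend_some_none u) _; rewrite leq_pmull.
Qed.

Hypothesis w_sc : strongly_connected w.

Lemma dist_extend_some u v :
  dist w' (Some u) (Some v) = minn (2 * dist w u v) (2 * k).
Proof.
apply/eqP; rewrite eqn_leq; apply/andP; split.
  rewrite leq_min (dist_min (has_walk_via_apex u v)) andbT.
  have [q [/andP [q_path /eqP q_last] <-]] := dist_has_walk (connect_has_walk (w_sc u v)).
  apply: dist_min; exists (map Some q); split.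
    by rewrite /is_walk path_extend_some q_path last_map -q_last eqxx.
  exact: walk_weight_extend_some.
have [p [/andP [p_path /eqP p_last] <-]] :=
  dist_has_walk (ex_intro _ _ (has_walk_via_apex u v)).
have [apex_p|/map_Some_of_notin_None [q p_q]] := boolP (None \in p).
  exact: leq_trans (geq_minr _ _) (walk_weight_through_apex p_path p_last apex_p).
move: p_path p_last; rewrite p_q path_extend_some last_map => q_path [q_last].
rewrite walk_weight_extend_some (leq_trans (geq_minl _ _)) // leq_mul2l dist_min ?orbT //.
by exists q; rewrite /is_walk q_path q_last eqxx.
Qed.

Lemma ecc_extend_some_eq u :
  0 < k -> (ecc w' (Some u) == 2 * k) = (k <= ecc w u).
Proof.
move=> k_gt0; have [|v ecc_v] := eq_bigmax (fun v => dist w u v).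
  by apply/card_gt0P; exists u.
rewrite /ecc ecc_v; have [|a ecc'_a] := eq_bigmax (fun a => dist w' (Some u) a).
  by rewrite card_option.
apply/eqP/idP => [|le_k].
  rewrite ecc'_a; case: a {ecc'_a} => [b|/eqP].
    rewrite dist_extend_some => /eqP; rewrite eqn_leq geq_minr leq_min leqnn andbT.
    by rewrite leq_pmul2l // => /leq_trans; apply; rewrite -ecc_v leq_bigmax.
  rewrite eqn_leq => /andP [_ le_2k]; move: (leq_trans le_2k (dist_extend_some_none u)).
  by rewrite -{2}(mul1n k) leq_pmul2r.
apply/eqP; rewrite eqn_leq ecc_extend_some_le /=.
rewrite (leq_trans _ (leq_bigmax (Some v))) //= dist_extend_some.
by rewrite leq_min leqnn andbT leq_mul2l le_k orbT.
Qed.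

End Extension.

Theorem mainTheorem5 (T : finType) (w : wgraph T) (k : nat) :
  0 < #|T| -> strongly_connected w -> 0 < k ->
  (k <= radius w <->
   \sum_(u : option T) ecc (extend w k) u = 2 * k * #|T| + k).
Proof.
move=> T_gt0 w_sc k_gt0.
have sum_eq : (\sum_v ecc (extend w k) (Some v) == 2 * k * #|T|) =
              [forall v, ecc (extend w k) (Some v) == 2 * k].
  have := (leqif_sum (fun v (_ : true) => leqif_eq (ecc_extend_some_le w k v))).2.
  by rewrite sum_nat_const mulnC.
rewrite leq_radius // big_option /= ecc_extend_none // [k + _]addnC.
split=> [ecc_ge |].
  by congr (_ + _); apply/eqP; rewrite sum_eq; apply/forallP=> u; rewrite ecc_extend_some_eq.
by move=> /eqP; rewrite eqn_add2r sum_eq => /forallP ecc_eq u; rewrite -ecc_extend_some_eq.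
Qed.
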